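(* For every finite item sequence $I=(a_1,\dots,a_n)\in(0,1]^n$, the algorithm $MM$ satisfies $MM(I)\le \frac{3}{2}\cdot OPT(I)+1$.
   Context: Classic bin packing: an item sequence $I=(a_1,\dots,a_n)\in(0,1]^n$ (item $i$ has size $a_i$) must be packed into bins of capacity $1$, i.e. one seeks an assignment $f:\{1,\dots,n\}\to\mathbb{N}$ with $\sum_{i:f(i)=j}a_i\le 1$ for every bin $j$; the cost is the number of non-empty bins. $OPT(I)$ is the minimum possible number of non-empty bins, and $ALG(I)$ denotes the number of non-empty bins in the assignment output by an algorithm $ALG$. Algorithm $MM$: sort $I$ in non-increasing order of size; keep a single open bin with current load $S$ (initially a new empty bin). Repeat while items remain: if the largest remaining item (head) fits, i.e. $S+\text{head}\le1$, pack it into the open bin; otherwise, if the smallest remaining item (tail) fits, pack it into the open bin; otherwise close the open bin permanently and open a new empty bin. *)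

From HB Require Import structures.
From mathcomp Require Import all_boot all_order all_algebra.
From mathcomp Require Import boolp.
Set Implicit Arguments. Unset Strict Implicit. Unset Printing Implicit Defensive.
Import Order.TTheory GRing.Theory Num.Theory.
Local Open Scope ring_scope.

Section BinPacking.
Variable R : realFieldType.

Definition valid_instance (I : seq R) : bool := all (fun x => (0 < x) && (x <= 1)) I.

Definition feasible (I : seq R) (f : 'I_(size I) -> nat) : Prop :=
  forall j : nat, \sum_(i < size I | f i == j) I`_i <= 1.

Definition nonempty_bins (I : seq R) (f : 'I_(size I) -> nat) : nat :=
  size (undup [seq f i | i <- enum 'I_(size I)]).

Definition achievable (I : seq R) (k : nat) : bool :=
  `[< exists f : 'I_(size I) -> nat, feasible f /\ nonempty_bins f = k >].

(* OPT(I) = minimum cost of a feasible packing (0 if none exists, which does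
   not happen for valid instances). *)
Definition OPT (I : seq R) : nat :=
  match pselect (exists k, achievable I k) with
  | left h => ex_minn h
  | right _ => 0%N
  end.

(* state: (remaining items sorted non-increasingly, open bin contents,
           closed bins) *)
Definition mm_state := (seq R * seq R * seq (seq R))%type.

Definition load (b : seq R) : R := \sum_(x <- b) x.

Definition mm_step (st : mm_state) : mm_state :=
  let: (rem, opn, cls) := st in
  match rem with
  | [::] => st
  | hd :: rest =>
      if load opn + hd <= 1 then (rest, hd :: opn, cls)
      else if load opn + last hd rest <= 1
           then (belast hd rest, last hd rest :: opn, cls)
           else (rem, [::], opn :: cls)
  end.

(* Each step packs an item or closes a bin; a close is always followed by
   packing the head into the new empty bin, so 2n+1 steps suffice to empty
   the list of remaining items. *)
Definition mm_run (I : seq R) : mm_state :=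
  iter (size I).*2.+1 mm_step (sort (fun x y => y <= x) I, [::], [::]).

Definition mm_bins (I : seq R) : seq (seq R) :=
  let: (_, opn, cls) := mm_run I in opn :: cls.

Definition MM (I : seq R) : nat := count (fun b => b != [::]) (mm_bins I).

End BinPacking.

(* MM puts the largest remaining item into every new bin.  As long as every closed
   bin has load at least 2/3, the number of closed bins is at most 3/2 times the
   total size, hence at most 3/2 OPT.  Suppose a bin is closed with load below 2/3.
   It contains an item larger than 1/2: otherwise it holds two items at least as
   large as the smallest remaining item t, and t did not fit, which forces a load
   above 2/3.  Since t did not fit, t > 1/3, so every later item exceeds 1/3; and
   every earlier bin also contains an item larger than 1/2, because it was opened
   with an item at least that large.  From then on every closed bin has weight at
   least 1, where items in (1/2, 1] weigh 1 and items in (1/3, 1/2] weigh 1/2, while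
   a feasible bin weighs at most 3/2; so again there are at most 3/2 OPT closed bins.
   The open bin accounts for the +1.  These bounds hold after any number of steps. *)

From HB Require Import structures.
From mathcomp Require Import all_boot all_order all_algebra.
From mathcomp Require Import boolp.
From mathcomp Require Import lra.
Import Order.TTheory GRing.Theory Num.Theory.
Local Open Scope ring_scope.
Set Implicit Arguments. Unset Strict Implicit. Unset Printing Implicit Defensive.

Section BinPackingBounds.
Variable R : realFieldType.
Implicit Types (I s : seq R) (x t : R).

Section CountSum.
Variables (T : eqType) (s : seq T) (p : pred T) (f : T -> R) (t : R).
Hypothesis f_ge0 : forall y, y \in s -> 0 <= f y.

Lemma sumr_const_count (c : R) : \sum_(y <- s | p y) c = (count p s)%:R * c.
Proof. by rewrite big_const_seq iter_addr_0 mulr_natl. Qed.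

Lemma ler_sum_cond : \sum_(y <- s | p y) f y <= \sum_(y <- s) f y.
Proof.
rewrite [leRHS](bigID p) /= lerDl big_seq_cond sumr_ge0 // => y /andP[ys _].
exact: f_ge0.
Qed.

Lemma ler_count_sum :
  (forall y, y \in s -> p y -> t <= f y) -> (count p s)%:R * t <= \sum_(y <- s) f y.
Proof.
move=> tf; apply: le_trans ler_sum_cond.
rewrite -sumr_const_count big_seq_cond [leRHS]big_seq_cond ler_sum // => y /andP[ys py].
exact: tf.
Qed.

Lemma ltr_count_sum :
  (forall y, y \in s -> p y -> t < f y) -> has p s ->
  (count p s)%:R * t < \sum_(y <- s) f y.
Proof.
move=> tf ps; apply: lt_le_trans ler_sum_cond.
rewrite -sumr_const_count big_seq_cond [ltRHS]big_seq_cond ltr_sum // => [|y /andP[ys py]].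
  by case/hasP: ps => y ys py; apply/hasP; exists y; rewrite ?ys.
exact: tf.
Qed.

End CountSum.

Lemma count_gt_lt1 s t : (forall x, x \in s -> 0 <= x) -> load s <= 1 ->
  (count (fun x => t < x) s)%:R * t < 1.
Proof.
move=> s_ge0 s_le1; have [gt_s|] := boolP (has (fun x => t < x) s).
  exact: lt_le_trans (ltr_count_sum s_ge0 (fun x _ => id) gt_s) s_le1.
by rewrite has_count lt0n negbK => /eqP ->; rewrite mul0r ltr01.
Qed.

Definition large x : bool := 1/2 < x.

Definition weight x : R := ((1/2 < x)%R%:R + (1/3 < x)%R%:R) / 2.

Lemma weight_ge0 x : 0 <= weight x.
Proof. by rewrite /weight divr_ge0 ?addr_ge0. Qed.

Lemma weight_large x : large x -> weight x = 1.
Proof.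
rewrite /weight /large => x_large; rewrite x_large (lt_trans _ x_large) //=; lra.
Qed.

Lemma weight_gt_third x : 1/3 < x -> 1/2 <= weight x.
Proof. by rewrite /weight => ->; case: (1/2 < x) => /=; lra. Qed.

Lemma sumr_indicator (T : eqType) (r : seq T) (p : pred T) :
  \sum_(y <- r) (p y)%:R = (count p r)%:R :> R.
Proof.
rewrite -[RHS]mulr1 -sumr_const_count [RHS]big_mkcond.
by apply: eq_bigr => y _; case: (p y).
Qed.

Lemma sum_weight_count s : \sum_(x <- s) weight x =
  ((count (fun x => 1/2 < x) s)%:R + (count (fun x => 1/3 < x) s)%:R) / 2.
Proof. by rewrite -mulr_suml big_split /= !sumr_indicator. Qed.

Lemma bin_weight_le s : (forall x, x \in s -> 0 <= x) -> load s <= 1 ->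
  \sum_(x <- s) weight x <= 3/2.
Proof.
move=> s_ge0 s_le1; rewrite sum_weight_count.
have few_large : (count (fun x => 1/2 < x) s)%:R <= 1 :> R.
  rewrite lern1 -ltnS -(ltr_nat R); have := count_gt_lt1 (1/2) s_ge0 s_le1; lra.
have few_medium : (count (fun x => 1/3 < x) s)%:R <= 2 :> R.
  rewrite (ler_nat R _ 2) -ltnS -(ltr_nat R).
  have := count_gt_lt1 (1/3) s_ge0 s_le1; lra.
lra.
Qed.

Lemma sum_weight_large s : has large s -> 1 <= \sum_(x <- s) weight x.
Proof.
move=> s_large; apply: le_trans (ler_count_sum (p := large) (t := 1) _ _).
- by rewrite mulr1 ler1n -has_count.
- by move=> y _; apply: weight_ge0.
- by move=> y _ /weight_large ->.
Qed.

Lemma sum_weight_gt_third s : all (fun x => 1/3 < x) s -> (2 <= size s)%N ->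
  1 <= \sum_(x <- s) weight x.
Proof.
move=> /allP s_gt size_s; rewrite -count_predT in size_s.
apply: le_trans (ler_count_sum (p := predT) (t := 1/2) _ _).
- by rewrite -(ler_nat R) in size_s; lra.
- by move=> y _; apply: weight_ge0.
- by move=> y ys _; apply/weight_gt_third/s_gt.
Qed.

Lemma OPT_spec I : valid_instance I ->
  exists f : 'I_(size I) -> nat, feasible f /\ nonempty_bins f = OPT I.
Proof.
move=> vI; have one_per_bin : exists k, achievable I k.
  exists (nonempty_bins (@nat_of_ord (size I))).
  apply/asboolP; exists (@nat_of_ord _); split => // j.
  have [j_lt | j_ge] := ltnP j (size I).
    rewrite (big_pred1 (Ordinal j_lt)); last by move=> i /=; rewrite -val_eqE.
    by have /andP[] := allP vI _ (mem_nth 0 j_lt).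
  rewrite big_pred0 // => i; apply/negbTE; rewrite neq_ltn.
  by rewrite (leq_trans (ltn_ord i) j_ge).
rewrite /OPT; case: pselect => [ex | no_ex]; last by case: (no_ex one_per_bin).
by case: ex_minnP => k /asboolP[f [f_feas <-]] _; exists f.
Qed.

Lemma sum_le_OPT I (w : R -> R) (c : R) : valid_instance I ->
  (forall s, valid_instance s -> load s <= 1 -> \sum_(x <- s) w x <= c) ->
  \sum_(x <- I) w x <= c * (OPT I)%:R.
Proof.
move=> vI bin_le; have [f [f_feas <-]] := OPT_spec vI.
rewrite /nonempty_bins; set bins := undup _.
have bins_f i : f i \in bins by rewrite mem_undup map_f ?mem_enum.
have -> : \sum_(x <- I) w x = \sum_(j <- bins) \sum_(i < size I | f i == j) w I`_i.
  under [RHS]eq_bigr do rewrite big_mkcond.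
  rewrite exchange_big (big_nth 0) big_mkord /=; apply: eq_bigr => i _.
  rewrite (bigD1_seq (f i)) ?undup_uniq //= eqxx big1 ?addr0 // => j.
  by rewrite eq_sym => /negbTE ->.
apply: le_trans (_ : \sum_(j <- bins) c <= _); last first.
  by rewrite big_const_seq iter_addr_0 count_predT mulr_natr.
apply: ler_sum => j _.
have := bin_le [seq I`_i | i : 'I_(size I) <- index_enum _ & f i == j].
rewrite /load !big_map !big_filter; apply; last exact: f_feas.
by apply/allP => _ /mapP[i _ ->]; apply: (allP vI); apply: mem_nth.
Qed.

Definition dominates (rem : seq R) y : bool := all (fun z => z <= y) rem.
Arguments dominates : simpl never.

Definition open_ok (rem opn : seq R) : Prop :=
  [\/ has large opn, (2 <= count (dominates rem) opn)%N
    | all (dominates rem) opn /\ (size opn <= 1)%N].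

(* The two phases: before and after the first bin closed with load below 2/3. *)
Definition closed_ok (pending : seq R) (cls : seq (seq R)) : Prop :=
  (all (fun B => 2/3 <= load B) cls /\ (has large pending -> all (has large) cls))
  \/ (all (fun B => 1 <= \sum_(x <- B) weight x) cls
      /\ all (fun x => 1/3 < x) pending).

Definition mm_inv I (st : mm_state R) : Prop :=
  let: (rem, opn, cls) := st in
  [/\ sorted (fun x y => y <= x) rem, perm_eq (rem ++ opn ++ flatten cls) I,
      open_ok rem opn & closed_ok (rem ++ opn) cls].

Lemma dominates_sub (r1 r2 : seq R) y :
  {subset r2 <= r1} -> dominates r1 y -> dominates r2 y.
Proof. by move=> sub /allP dom; apply/allP => z /sub /dom. Qed.

Lemma sorted_ge_last x s :
  sorted (fun a b => b <= a) (x :: s) -> all (fun z => last x s <= z) (x :: s).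
Proof.
rewrite lastI -rev_sorted rev_rcons /= => /(order_path_min le_trans).
by rewrite all_rcons lexx all_rev.
Qed.

Lemma closed_ok_perm p1 p2 cls :
  perm_eq p1 p2 -> closed_ok p1 cls -> closed_ok p2 cls.
Proof. by move=> pe; rewrite /closed_ok (perm_has _ pe) (perm_all _ pe). Qed.

Section Step.
Variables (I : seq R) (hd : R) (rest opn : seq R) (cls : seq (seq R)).
Hypotheses (vI : valid_instance I)
  (rem_sorted : sorted (fun x y => y <= x) (hd :: rest))
  (rem_perm : perm_eq ((hd :: rest) ++ opn ++ flatten cls) I)
  (open_inv : open_ok (hd :: rest) opn)
  (closed_inv : closed_ok ((hd :: rest) ++ opn) cls).

Local Notation rem := (hd :: rest).
Local Notation t := (last hd rest).

Lemma state_item_range x : x \in rem ++ opn ++ flatten cls -> 0 < x <= 1.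
Proof. by rewrite (perm_mem rem_perm); apply: (allP vI). Qed.

Lemma rem_item_range x : x \in rem -> 0 < x <= 1.
Proof. by move=> xr; apply: state_item_range; rewrite mem_cat xr. Qed.

Lemma open_item_ge0 x : x \in opn -> 0 <= x.
Proof.
move=> xo; have /andP[x_gt0 _] : 0 < x <= 1.
  by apply: state_item_range; rewrite !mem_cat xo orbT.
exact: ltW.
Qed.

Lemma hd_dominates_rest : dominates rest hd.
Proof. exact: order_path_min (rev_trans le_trans) rem_sorted. Qed.

Lemma open_single_large y x :
  opn = [:: y] -> x \in rem -> 1 < load opn + x -> large y.
Proof.
move=> opn_y xr; move: open_inv; rewrite opn_y /open_ok /load big_seq1.
case=> [/= | | [/allP/(_ y (mem_head _ _))/allP dom_y _]]; first by rewrite orbF.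
  by rewrite /= addn0 ltnNge leq_b1.
by rewrite /large; have := dom_y x xr; lra.
Qed.

Lemma inv_pack_head : mm_inv I (rest, hd :: opn, cls).
Proof.
have pending_perm : perm_eq (rem ++ opn) (rest ++ hd :: opn).
  exact: permEl (perm_catCA [:: hd] rest opn).
split.
- exact: path_sorted rem_sorted.
- by apply: perm_trans rem_perm; apply: permEl (perm_catCA rest [:: hd] _).
- case: open_inv => [opn_large | two_dom | [all_dom size_le1]].
  + by apply: Or31; rewrite /= opn_large orbT.
  + apply: Or32; apply: leq_trans two_dom (leq_trans _ (leq_addl _ _)).
    by apply: sub_count => y; apply: dominates_sub => z zr; rewrite inE zr orbT.
  + case: opn all_dom size_le1 => [|y [|//]] /=.
      by move=> _ _; apply: Or33; rewrite /= hd_dominates_rest.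
    move=> /andP[dom_y _] _; apply: Or32.
    rewrite /= hd_dominates_rest (dominates_sub _ dom_y) // => z zr.
    by rewrite inE zr orbT.
- exact: closed_ok_perm pending_perm closed_inv.
Qed.

Lemma inv_pack_tail : 1 < load opn + hd -> mm_inv I (belast hd rest, t :: opn, cls).
Proof.
move=> head_no_fit; have pending_eq : belast hd rest ++ t :: opn = rem ++ opn.
  by rewrite -cat_rcons -lastI.
have sub_rem : {subset belast hd rest <= rem} by apply: mem_belast.
split.
- move: rem_sorted; rewrite lastI -cats1.
  apply: subseq_sorted (prefix_subseq _ _); exact: rev_trans le_trans.
- by rewrite catA pending_eq -catA.
- case: open_inv => [opn_large | two_dom | [_ size_le1]].
  + by apply: Or31; rewrite /= opn_large orbT.
  + apply: Or32; apply: leq_trans two_dom (leq_trans _ (leq_addl _ _)).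
    by apply: sub_count => y; apply: dominates_sub.
  + apply: Or31; case E: opn size_le1 head_no_fit => [|y [|//]] _.
      rewrite /load big_nil add0r ltNge.
      by have /andP[_ ->] := rem_item_range (mem_head hd rest).
    rewrite -E => /(open_single_large E (mem_head _ _)) y_large.
    by rewrite E /= y_large orbT.
- by rewrite pending_eq.
Qed.

Section Close.
Hypothesis tail_no_fit : 1 < load opn + t.

Lemma close_large_or_two : has large opn \/ (2 <= count (dominates rem) opn)%N.
Proof.
case: open_inv => [opn_large | two_dom | [_ size_le1]]; [by left | by right | left].
case E: opn size_le1 tail_no_fit => [|y [|//]] _.
  rewrite /load big_nil add0r ltNge.
  by have /andP[_ ->] := rem_item_range (mem_last hd rest).
rewrite -E => /(open_single_large E (mem_last _ _)) y_large.
by rewrite E /= y_large.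
Qed.

Lemma close_load : ~~ has large opn -> 2/3 < load opn.
Proof.
move=> no_large; have two_dom : (2 <= count (dominates rem) opn)%N.
  by case: close_large_or_two => // opn_large; rewrite opn_large in no_large.
have := ler_count_sum (p := dominates rem) (f := fun y => y) (t := t) open_item_ge0
  (fun y _ dom_y => allP dom_y t (mem_last hd rest)).
rewrite -(ler_nat R) in two_dom; move: tail_no_fit; rewrite /load; nra.
Qed.

Lemma close_rem_gt_third : load opn <= 2/3 -> all (fun x => 1/3 < x) rem.
Proof.
move=> small; apply/allP => z zr.
have /= := allP (sorted_ge_last rem_sorted) z zr; move: tail_no_fit; lra.
Qed.

Lemma close_large_rem : has large rem -> has large opn.
Proof.
case: close_large_or_two => // two_dom /hasP[z zr z_large].
have /hasP[y yo dom_y] : has (dominates rem) opn by rewrite has_count (leq_trans _ two_dom).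
by apply/hasP; exists y; rewrite // /large (lt_le_trans z_large) ?(allP dom_y).
Qed.

Lemma close_weight : all (fun x => 1/3 < x) opn -> 1 <= \sum_(x <- opn) weight x.
Proof.
case: close_large_or_two => [/sum_weight_large // | two_dom opn_gt].
exact: sum_weight_gt_third opn_gt (leq_trans two_dom (count_size _ _)).
Qed.

Lemma inv_close : mm_inv I (rem, [::], opn :: cls).
Proof.
split => //; first exact: Or33.
rewrite cats0; case: closed_inv => [[loads cls_large] | [weights pending_gt]].
- have [big | small] := lerP (2/3) (load opn).
    left; split; first by rewrite /= big loads.
    move=> /close_large_rem opn_large; rewrite /= opn_large.
    by apply: cls_large; rewrite has_cat opn_large orbT.
  have opn_large : has large opn.
    by apply/negPn/negP => /close_load; lra.
  right; split; last exact/close_rem_gt_third/ltW.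
  rewrite /= sum_weight_large //; apply: sub_all (cls_large _) => [B|].
    exact: sum_weight_large.
  by rewrite has_cat opn_large orbT.
- move: pending_gt; rewrite all_cat => /andP[rem_gt opn_gt].
  by right; rewrite /= weights close_weight.
Qed.

End Close.
End Step.

Lemma mm_step_inv I st : valid_instance I -> mm_inv I st -> mm_inv I (mm_step st).
Proof.
case: st => [[[|hd rest] opn] cls] // vI [srt pe open_inv closed_inv] /=.
case: ifP => [_ | /negbT]; first exact: inv_pack_head.
rewrite -ltNge => head_no_fit; case: ifP => [_ | /negbT]; first exact: inv_pack_tail.
by rewrite -ltNge; apply: inv_close.
Qed.

Lemma mm_run_inv I : valid_instance I -> mm_inv I (mm_run I).
Proof.
move=> vI; rewrite /mm_run; elim: (size I).*2.+1 => [|n IH] /=; last exact: mm_step_inv.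
split; last by left.
- by apply: sort_sorted => x y; apply: le_total.
- by rewrite cats0; apply: permEl (perm_sort _ I).
- exact: Or33.
Qed.

Lemma sum_closed_le (f : R -> R) I rem opn cls :
  (forall x, x \in I -> 0 <= f x) -> perm_eq (rem ++ opn ++ flatten cls) I ->
  \sum_(B <- cls) \sum_(x <- B) f x <= \sum_(x <- I) f x.
Proof.
move=> f_ge0 pe; have f_ge0' x : x \in rem ++ opn ++ flatten cls -> 0 <= f x.
  by rewrite (perm_mem pe); apply: f_ge0.
rewrite -big_flatten -(perm_big _ pe) catA big_cat /= lerDr big_seq sumr_ge0 // => x x_in.
by apply: f_ge0'; rewrite catA mem_cat x_in.
Qed.

Lemma closed_bins_le_OPT I rem opn cls : valid_instance I ->
  perm_eq (rem ++ opn ++ flatten cls) I -> closed_ok (rem ++ opn) cls ->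
  (size cls)%:R <= 3/2 * (OPT I)%:R :> R.
Proof.
move=> vI pe; have I_ge0 x : x \in I -> 0 <= x.
  by move=> /(allP vI) /andP[x_gt0 _]; apply: ltW.
rewrite -count_predT; case=> [[/allP loads _] | [/allP weights _]].
- have load_ge0 B : B \in cls -> 0 <= load B.
    by move=> /loads /=; apply: le_trans; lra.
  have := ler_count_sum (p := predT) (t := 2/3) load_ge0 (fun B B_in _ => loads B B_in).
  have := sum_closed_le (f := fun x => x) I_ge0 pe.
  have := sum_le_OPT (w := fun x => x) (c := 1) vI (fun s _ s_le1 => s_le1).
  rewrite /load; lra.
- have := ler_count_sum (p := predT) (t := 1)
    (fun B B_in => le_trans ler01 (weights B B_in)) (fun B B_in _ => weights B B_in).
  have := sum_closed_le (f := weight) (fun x _ => weight_ge0 x) pe.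
  have := sum_le_OPT (w := weight) (c := 3/2) vI
    (fun s vs => bin_weight_le (fun x xs => ltW (proj1 (andP (allP vs x xs))))).
  lra.
Qed.

End BinPackingBounds.

Theorem theorem1 (R : realFieldType) (I : seq R) :
  valid_instance I ->
  (MM I)%:R <= 3 / 2 * (OPT I)%:R + 1 :> R.
Proof.
move=> vI; rewrite /MM /mm_bins; have := mm_run_inv vI.
case: (mm_run I) => [[rem opn] cls] [_ pe _ closed_inv].
have := closed_bins_le_OPT vI pe closed_inv.
have : (count (fun b => b != [::]) (opn :: cls) <= size cls + 1)%N.
  by rewrite /= addnC leq_add ?leq_b1 ?count_size.
rewrite -(ler_nat R) natrD; lra.
Qed.
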